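(* Let $Q$ be a quantity space over a field $K$ with a basis $E=\{e_1,\ldots,e_n\}$. Then the subset $U=\{1\cdot\prod_{i=1}^n e_i^{k_i}\mid k_1,\ldots,k_n\in\mathbb{Z}\}$ of $Q$ is a coherent system of unit quantities for $Q$.
   Context: A scalable monoid over a (unital, associative) ring $R$ is a monoid $X$ (identity $1_X$, product written $xy$) together with a map $R\times X\to X$, $(\alpha,x)\mapsto\alpha\cdot x$, such that $1\cdot x=x$, $\alpha\cdot(\beta\cdot x)=\alpha\beta\cdot x$ and $\alpha\cdot(xy)=(\alpha\cdot x)y=x(\alpha\cdot y)$. A quantity space over a field $K$ is a commutative scalable monoid $Q$ over $K$ for which there exists a basis, i.e. a finite set $\{e_1,\ldots,e_n\}$ of invertible elements of $Q$ such that every $x\in Q$ has a unique expansion $x=\mu\cdot\prod_{i=1}^n e_i^{k_i}$ with $\mu\in K$ and $k_i\in\mathbb{Z}$. On $Q$, $x\sim y$ iff $\alpha\cdot x=\beta\cdot y$ for some $\alpha,\beta\in K$. A unit element (unit quantity) is an element $u$ such that every $x\sim u$ equals $\lambda\cdot u$ for some $\lambda\in K$ and $\lambda\cdot u=\lambda'\cdot u$ implies $\lambda=\lambda'$. A set $U\subseteq Q$ is dense if for every $x\in Q$ there is $u\in U$ with $u\sim x$, and sparse if $u\sim v$ implies $u=v$ for $u,v\in U$. A coherent system of unit quantities is a submonoid of $Q$ that is a dense and sparse set of unit elements. *)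

From mathcomp Require Import all_boot all_algebra.
Set Implicit Arguments. Unset Strict Implicit. Unset Printing Implicit Defensive.
Import GRing.Theory.
Local Open Scope ring_scope.

Record scalable_monoid (R : nzRingType) := ScalableMonoid {
  sm_carrier :> Type;
  sm_mul : sm_carrier -> sm_carrier -> sm_carrier;
  sm_one : sm_carrier;
  sm_scale : R -> sm_carrier -> sm_carrier;
  sm_mulA : forall x y z, sm_mul x (sm_mul y z) = sm_mul (sm_mul x y) z;
  sm_mul1x : forall x, sm_mul sm_one x = x;
  sm_mulx1 : forall x, sm_mul x sm_one = x;
  sm_scale1 : forall x, sm_scale 1 x = x;
  sm_scaleA : forall a b x, sm_scale a (sm_scale b x) = sm_scale (a * b) x;
  sm_scale_mull : forall a x y, sm_scale a (sm_mul x y) = sm_mul (sm_scale a x) y;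
  sm_scale_mulr : forall a x y, sm_scale a (sm_mul x y) = sm_mul x (sm_scale a y)
}.

Section Defs.
Variables (R : nzRingType) (X : scalable_monoid R).
Local Notation mul := (@sm_mul R X).
Local Notation one := (@sm_one R X).
Local Notation scl := (@sm_scale R X).

Definition commutative_sm : Prop := forall x y : X, mul x y = mul y x.

Definition inverse_pair (x xinv : X) : Prop := mul x xinv = one /\ mul xinv x = one.

Definition invertible (x : X) : Prop := exists xinv, inverse_pair x xinv.

Definition zpow (x xinv : X) (k : int) : X :=
  match k with
  | Posz m => iter m (mul x) one
  | Negz m => iter m.+1 (mul xinv) one
  end.

Definition monomial n (e einv : 'I_n -> X) (k : 'I_n -> int) : X :=
  \big[mul/one]_(i < n) zpow (e i) (einv i) (k i).

Definition is_basis n (e einv : 'I_n -> X) : Prop :=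
  (forall i, inverse_pair (e i) (einv i)) /\
  forall x : X, exists mu (k : 'I_n -> int),
    x = scl mu (monomial e einv k) /\
    forall mu' (k' : 'I_n -> int), x = scl mu' (monomial e einv k') ->
      mu' = mu /\ forall i, k' i = k i.

Definition quantity_space : Prop :=
  commutative_sm /\ exists n (e einv : 'I_n -> X), is_basis e einv.

Definition sim (x y : X) : Prop := exists a b, scl a x = scl b y.

Definition unit_element (u : X) : Prop :=
  (forall x, sim x u -> exists l, x = scl l u) /\
  (forall l l', scl l u = scl l' u -> l = l').

Definition dense (U : X -> Prop) : Prop := forall x, exists u, U u /\ sim u x.
Definition sparse (U : X -> Prop) : Prop := forall u v, U u -> U v -> sim u v -> u = v.
Definition submonoid (U : X -> Prop) : Prop :=
  U one /\ forall u v, U u -> U v -> U (mul u v).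

Definition coherent_system (U : X -> Prop) : Prop :=
  [/\ submonoid U, dense U, sparse U & forall u, U u -> unit_element u].

End Defs.

(* Every quantity is [mu . m] for a unique scalar [mu] and a unique monomial
   [m] in the basis elements.  Hence two proportional monomials coincide and a
   monomial is never proportional to itself with two different scalars: the
   monomials are pairwise non-proportional unit elements, one in every
   proportionality class, and commutativity makes them closed under
   multiplication, the exponents adding up. *)
From HB Require Import structures.
From mathcomp Require Import all_boot all_algebra.
From mathcomp Require Import zify.
Import GRing.Theory.
Local Open Scope ring_scope.

HB.instance Definition _ (R : nzRingType) (Q : scalable_monoid R) :=
  Monoid.isLaw.Build (sm_carrier Q) (sm_one Q) (@sm_mul R Q)
    (@sm_mulA R Q) (@sm_mul1x R Q) (@sm_mulx1 R Q).

Section ScalableMonoid.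
Variables (R : nzRingType) (Q : scalable_monoid R).
Local Notation mul := (@sm_mul R Q).
Local Notation one := (@sm_one R Q).
Local Notation scl := (@sm_scale R Q).

Section IntegerPowers.
Variables (x y : Q) (Hxy : inverse_pair x y).

Lemma zpowD1 k : zpow x y (k + 1) = mul x (zpow x y k).
Proof.
case: k => [m|[|m]].
- by rewrite -PoszD addn1.
- by rewrite /= sm_mulx1 (proj1 Hxy).
- have -> : Negz m.+1 + 1 = Negz m by rewrite !NegzE; lia.
  by rewrite /= sm_mulA (proj1 Hxy) sm_mul1x.
Qed.

Lemma zpowB1 k : zpow x y (k - 1) = mul y (zpow x y k).
Proof.
case: k => [[|m]|m] //.
- have -> : Posz m.+1 - 1 = Posz m by lia.
  by rewrite /= sm_mulA (proj2 Hxy) sm_mul1x.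
- by have -> : Negz m - 1 = Negz m.+1 by rewrite !NegzE; lia.
Qed.

Lemma zpowD a b : mul (zpow x y a) (zpow x y b) = zpow x y (a + b).
Proof.
elim/int_ind: a => [|m IH|m IH]; first by rewrite add0r sm_mul1x.
- by rewrite -addn1 PoszD zpowD1 -sm_mulA IH -zpowD1 addrAC.
- by rewrite -addn1 PoszD opprD zpowB1 -sm_mulA IH -zpowB1 addrAC.
Qed.

End IntegerPowers.

Lemma big_mul_split (Hc : commutative_sm Q) n (F G : 'I_n -> Q) :
  mul (\big[mul/one]_(i < n) F i) (\big[mul/one]_(i < n) G i)
  = \big[mul/one]_(i < n) mul (F i) (G i).
Proof.
elim: n F G => [|n IH] F G; first by rewrite !big_ord0 sm_mul1x.
rewrite !big_ord_recr /= -IH -!sm_mulA; congr (mul _ _).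
by rewrite !sm_mulA (Hc (F ord_max)).
Qed.

Section Monomials.
Variables (n : nat) (e einv : 'I_n -> Q).

Lemma monomial0 : monomial e einv (fun=> 0) = one.
Proof. exact: big1_eq. Qed.

Lemma monomialD (Hc : commutative_sm Q)
    (Hinv : forall i, inverse_pair (e i) (einv i)) k k' :
  mul (monomial e einv k) (monomial e einv k')
  = monomial e einv (fun i => k i + k' i).
Proof.
rewrite /monomial big_mul_split //.
by apply: eq_bigr => i _; apply: zpowD.
Qed.

Hypothesis HE : is_basis e einv.

Lemma scale_monomial_inj a b k k' :
  scl a (monomial e einv k) = scl b (monomial e einv k') ->
  a = b /\ monomial e einv k = monomial e einv k'.
Proof.
move=> Hab; have [mu [k0 [_ Huniq]]] := HE.2 (scl a (monomial e einv k)).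
have [-> Hk] := Huniq a k erefl; have [-> Hk'] := Huniq b k' Hab.
by split=> //; apply: eq_bigr => i _; rewrite Hk Hk'.
Qed.

Definition unit_monomials (x : Q) : Prop :=
  exists k : 'I_n -> int, x = scl 1 (monomial e einv k).

Lemma unit_monomials_submonoid :
  commutative_sm Q -> submonoid unit_monomials.
Proof.
move=> Hc; split; first by exists (fun=> 0); rewrite sm_scale1 monomial0.
move=> _ _ [k ->] [k' ->]; exists (fun i => k i + k' i).
by rewrite !sm_scale1 monomialD //; case: HE.
Qed.

Lemma unit_monomials_dense : dense unit_monomials.
Proof.
move=> x; have [mu [k [Ex _]]] := HE.2 x.
exists (scl 1 (monomial e einv k)); split; first by exists k.
by exists mu, 1; rewrite Ex !sm_scale1.
Qed.

Lemma unit_monomials_sparse : sparse unit_monomials.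
Proof.
move=> _ _ [k ->] [k' ->] [a [b]].
by rewrite !sm_scale1 => /scale_monomial_inj [_ ->].
Qed.

Lemma unit_monomial_unit_element u : unit_monomials u -> unit_element u.
Proof.
move=> [k ->]; split.
- move=> x [a [b]]; have [mu [k0 [Ex _]]] := HE.2 x.
  rewrite Ex sm_scaleA !sm_scale1 => /scale_monomial_inj [_ Hm].
  by exists mu; rewrite Hm.
- by move=> l l'; rewrite !sm_scale1 => /scale_monomial_inj [].
Qed.

End Monomials.

End ScalableMonoid.

Theorem proposition3p10 (K : fieldType) (Q : scalable_monoid K)
  (HQ : quantity_space Q) (n : nat) (e einv : 'I_n -> Q)
  (HE : is_basis e einv) :
  coherent_system
    (fun x : Q => exists k : 'I_n -> int, x = sm_scale 1 (monomial e einv k)).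
Proof.
split.
- exact: unit_monomials_submonoid HE HQ.1.
- exact: unit_monomials_dense.
- exact: unit_monomials_sparse.
- exact: unit_monomial_unit_element.
Qed.
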